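(* Let $U_1$ be a vector space over a field of characteristic zero, let $U_{0-}=\bigoplus_{p\geq1}U_{-p+1}$ with the bilinear operation $\circ$ defined below, and set $[\![A,B]\!]=A\circ B-B\circ A$ for $A,B\in U_{0-}$. Then $(U_{0-},[\![\cdot,\cdot]\!])$ is a Lie algebra.
   Context: Define vector spaces recursively by $U_{-p+1}=\mathrm{Hom}(U_1,U_{-p+2})$ for $p=1,2,\ldots$ (all linear maps). Elements of $U_{-p+1}$ are called operators of order $p$ (elements of $U_1$ have order $0$). For an operator $A$ of order $p\geq1$ and $x\in U_1$ set $A\circ x=A(x)$ and $x\circ A=0$. For operators $A,B$ of orders $p,q\geq1$, define $A\circ B\in U_{-(p+q-1)+1}$ recursively by $(A\circ B)(x)=A\circ B(x)+A(x)\circ B$ for all $x\in U_1$, and extend $\circ$ bilinearly to $U_{0-}$. *)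

From HB Require Import structures.
From mathcomp Require Import all_boot all_order all_algebra.
Set Implicit Arguments. Unset Strict Implicit. Unset Printing Implicit Defensive.
Import Order.TTheory GRing.Theory Num.Theory.
Local Open Scope ring_scope.

Definition is_lie_algebra (K : fieldType) (V : Type) (S : V -> Prop)
  (zero : V) (add : V -> V -> V) (scale : K -> V -> V) (br : V -> V -> V) : Prop :=
  S zero /\
      (forall A B, S A -> S B -> S (add A B)) /\
      (forall a A, S A -> S (scale a A)) /\
      (forall A B, S A -> S B -> S (br A B)) /\
      (forall a A B C, S A -> S B -> S C ->
          br (add (scale a A) B) C = add (scale a (br A C)) (br B C)) /\
      (forall a A B C, S A -> S B -> S C ->
          br A (add (scale a B) C) = add (scale a (br A B)) (br A C)) /\
      (forall A, S A -> br A A = zero) /\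
      (forall A B C, S A -> S B -> S C ->
          add (br A (br B C)) (add (br B (br C A)) (br C (br A B))) = zero).

Section Operators.
Variables (K : fieldType) (U : lmodType K).

Fixpoint Fn (p : nat) : Type := if p is p'.+1 then U -> Fn p' else U.

Fixpoint fzero (p : nat) : Fn p :=
  match p with 0 => (0 : U) | p'.+1 => fun _ => fzero p' end.

Fixpoint fadd (p : nat) : Fn p -> Fn p -> Fn p :=
  match p with
  | 0 => fun f g => (f : U) + g
  | p'.+1 => fun f g x => fadd (f x) (g x)
  end.

Fixpoint fscale (p : nat) (a : K) : Fn p -> Fn p :=
  match p with
  | 0 => fun f => a *: (f : U)
  | p'.+1 => fun f x => fscale a (f x)
  end.

(* islin p f : f belongs to U_{-p+1}, i.e. U_{-p+1} = Hom(U_1, U_{-p+2})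
   (all linear maps), recursively; U_1 = Fn 0 = U. *)
Fixpoint islin (p : nat) : Fn p -> Prop :=
  match p with
  | 0 => fun _ => True
  | p'.+1 => fun f =>
      (forall x, islin (f x)) /\
      (forall (a : K) (x y : U), f (a *: x + y) = fadd (fscale a (f x)) (f y))
  end.

Definition castF (m n : nat) (e : m = n) (f : Fn m) : Fn n := ecast k (Fn k) e f.

(* A of order p+1, B of order q+1; A \o B has order (p+1)+(q+1)-1 = p+q+1.
   (A \o B)(x) = A \o B(x) + A(x) \o B, with A \o y = A(y) for y in U_1
   and y \o B = 0 for y in U_1. *)
Fixpoint circ (p : nat) : forall q, Fn p.+1 -> Fn q.+1 -> Fn (p + q).+1 :=
  fix circ_p (q : nat) : Fn p.+1 -> Fn q.+1 -> Fn (p + q).+1 :=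
    let second (q0 : nat) : Fn p.+1 -> Fn q0.+1 -> U -> Fn (p + q0) :=
      match p as p0 return Fn p0.+1 -> Fn q0.+1 -> U -> Fn (p0 + q0) with
      | 0 => fun _ _ _ => fzero q0
      | p'.+1 => fun A B x => circ (A x) B
      end in
    match q as q0 return Fn p.+1 -> Fn q0.+1 -> Fn (p + q0).+1 with
    | 0 => fun A B x =>
        fadd (castF (esym (addn0 p)) (A (B x))) (second 0 A B x)
    | q'.+1 => fun A B x =>
        fadd (castF (esym (addnS p q')) (circ_p q' A (B x))) (second q'.+1 A B x)
    end.

(* Elements of U_{0-} = (+)_{p>=1} U_{-p+1}: families A with A p the
   component of order p+1, all linear, finitely many nonzero. *)
Definition Fam := forall p : nat, Fn p.+1.

Definition inU0m (A : Fam) : Prop :=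
  (forall p, islin (A p)) /\ exists N, forall p, (N <= p)%N -> A p = fzero p.+1.

Definition famzero : Fam := fun p => fzero p.+1.
Definition famadd (A B : Fam) : Fam := fun p => fadd (A p) (B p).
Definition famscale (a : K) (A : Fam) : Fam := fun p => fscale a (A p).

(* Bilinear extension of \o to U_{0-}: the order-(r+1) component of A \o B
   is the sum over p + q = r of A_(p+1) \o B_(q+1). *)
Definition famcirc (A B : Fam) : Fam := fun r =>
  \big[@fadd r.+1 / fzero r.+1]_(i < r.+1)
     castF (f_equal S (subnKC (ltn_ord i : (i <= r)%N)))
           (circ (A i) (B (r - i)%N)).

Definition fambracket (A B : Fam) : Fam :=
  famadd (famcirc A B) (famscale (-1) (famcirc B A)).

End Operators.

From mathcomp Require Import all_boot all_order all_algebra.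
From mathcomp Require Import boolp functions zify.
Set Implicit Arguments. Unset Strict Implicit. Unset Printing Implicit Defensive.
Import GRing.Theory.
Local Open Scope ring_scope.

(* Read an operator of order n as a function of a stream (x_1, x_2, ...) of
   arguments, multilinear in its first n entries.  Operators of all orders then live
   in one vector space, and A \o B is computed by the recursion [scirc]: feeding x
   to A \o B gives A \o (B x) + (A x) \o B.  Feeding x to the associator
   (A \o B) \o C - A \o (B \o C) likewise splits it into three associators,
   according to whether x is consumed by C, by B or by A; induction on the total
   order shows that the associator is symmetric in B and C.  Summing over orders,
   U_{0-} is a right pre-Lie algebra, and the commutator of a right pre-Lie product
   satisfies the Jacobi identity, the Jacobi sum being the alternating sum of the
   associators over the six orderings of A, B, C.  The Lie algebra is built on families of
   stream operators and transported back along the injective map [geval]. *)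

Lemma signed_cycle6 (V : zmodType) (x1 x2 x3 x4 x5 x6 : V) :
  (x1 - x2) - (x3 - x4) + ((x3 - x5) - (x6 - x2)) + ((x6 - x4) - (x1 - x5)) = 0.
Proof.
rewrite !opprB !addrA (@GRing.add V).[ACl ((1*12)*(2*7)*(3*10)*(4*5)*(6*11)*(8*9))].
by rewrite !subrr !addNr !addr0.
Qed.

Lemma subr_swap (V : zmodType) (a b c d : V) : a - b = c - d -> a - c = b - d.
Proof. by move/eqP; rewrite subr_eq => /eqP ->; rewrite addrC !addrA addNr add0r addrC. Qed.

Section CommutatorOfRightPreLie.
Variables (K : fieldType) (V : lmodType K) (S : V -> Prop) (m : V -> V -> V).
Hypotheses (S0 : S 0) (S_lin : forall a A B, S A -> S B -> S (a *: A + B))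
  (Sm : forall A B, S A -> S B -> S (m A B)).
Hypothesis m_linl : forall a A B C, S A -> S B -> S C ->
  m (a *: A + B) C = a *: m A C + m B C.
Hypothesis m_linr : forall a A B C, S A -> S B -> S C ->
  m A (a *: B + C) = a *: m A B + m A C.
Hypothesis m_preLie : forall A B C, S A -> S B -> S C ->
  m (m A B) C - m A (m B C) = m (m A C) B - m A (m C B).

Let S_sub A B : S A -> S B -> S (A - B).
Proof. by move=> SA SB; rewrite addrC -scaleN1r; apply: S_lin. Qed.

Let m_subl A B C : S A -> S B -> S C -> m (A - B) C = m A C - m B C.
Proof. by move=> *; rewrite addrC -scaleN1r m_linl // scaleN1r addrC. Qed.

Let m_subr A B C : S A -> S B -> S C -> m A (B - C) = m A B - m A C.
Proof. by move=> *; rewrite addrC -scaleN1r m_linr // scaleN1r addrC. Qed.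

Let commutatorE A B C : S A -> S B -> S C ->
  m A (m B C - m C B) - m (m B C - m C B) A =
  (m (m A B) C - m (m A C) B) - (m (m B C) A - m (m C B) A).
Proof.
move=> SA SB SC; have [SBC SCB] := (Sm SB SC, Sm SC SB).
rewrite m_subr ?m_subl //; congr (_ - _).
exact/esym/subr_swap/m_preLie.
Qed.

Lemma is_lie_algebra_commutator :
  is_lie_algebra S 0 +%R *:%R (fun A B => m A B - m B A).
Proof.
do !split => //.
- by move=> A B SA SB; rewrite -[A]scale1r; apply: S_lin.
- by move=> a A SA; rewrite -[_ *: _]addr0; apply: S_lin.
- by move=> A B SA SB; apply: S_sub; apply: Sm.
- move=> a A B C SA SB SC.
  by rewrite m_linl // m_linr // opprD addrACA scalerBr.
- move=> a A B C SA SB SC.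
  by rewrite m_linl // m_linr // opprD addrACA scalerBr.
- by move=> A _; rewrite subrr.
- by move=> A B C SA SB SC; rewrite !commutatorE // addrA signed_cycle6.
Qed.

End CommutatorOfRightPreLie.

Lemma is_lie_algebra_transfer (K : fieldType) (V W : Type)
    (S : V -> Prop) (zero : V) (add : V -> V -> V) (scale : K -> V -> V)
    (br : V -> V -> V) (T : W -> Prop) (zero' : W) (add' : W -> W -> W)
    (scale' : K -> W -> W) (br' : W -> W -> W) (f : V -> W) :
  injective f -> (forall A, S A <-> T (f A)) -> f zero = zero' ->
  {morph f : A B / add A B >-> add' A B} ->
  (forall a, {morph f : A / scale a A >-> scale' a A}) ->
  {morph f : A B / br A B >-> br' A B} ->
  is_lie_algebra T zero' add' scale' br' -> is_lie_algebra S zero add scale br.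
Proof.
move=> f_inj ST f0 fD fZ fbr [T0 [TD [TZ [Tbr [linl [linr [alt jac]]]]]]].
do !split.
- by apply/ST; rewrite f0.
- by move=> A B /ST ? /ST ?; apply/ST; rewrite fD; apply: TD.
- by move=> a A /ST ?; apply/ST; rewrite fZ; apply: TZ.
- by move=> A B /ST ? /ST ?; apply/ST; rewrite fbr; apply: Tbr.
- by move=> a A B C /ST ? /ST ? /ST ?; apply: f_inj; rewrite !(fbr, fD, fZ) linl.
- by move=> a A B C /ST ? /ST ? /ST ?; apply: f_inj; rewrite !(fbr, fD, fZ) linr.
- by move=> A /ST ?; apply: f_inj; rewrite fbr f0 alt.
- by move=> A B C /ST ? /ST ? /ST ?; apply: f_inj; rewrite !(fbr, fD) f0 jac.
Qed.

Lemma linear0_of (R : pzRingType) (V W : lmodType R) (f : V -> W) : linear f -> f 0 = 0.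
Proof. by move=> f_lin; have := f_lin (-1) 0 0; rewrite scaler0 addr0 scaleN1r addNr. Qed.

Lemma sum_triangle (V : nmodType) n (G : nat -> nat -> V) :
  \sum_(i < n.+1) \sum_(j < i.+1) G i j =
  \sum_(j < n.+1) \sum_(k < (n - j).+1) G (j + k)%N j.
Proof.
under eq_bigr => i _ do rewrite (big_ord_widen _ _ (ltn_ord i)).
rewrite (exchange_big_dep predT) //=; apply: eq_bigr => j _.
rewrite -(big_geq_mkord (0 + j) n.+1 predT (fun i => G i j)) big_addn big_mkord.
rewrite subSn; last exact: (ltn_ord j).
by apply: eq_bigr => k _; rewrite addnC.
Qed.

Section StreamOperators.
Variables (K : fieldType) (U : lmodType K).
Local Notation sop := ((nat -> U) -> U).

Definition scons (x : U) (s : nat -> U) : nat -> U :=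
  fun n => if n is n'.+1 then s n' else x.
Definition stail (s : nat -> U) : nat -> U := fun n => s n.+1.
Definition feed (x : U) (F : sop) : sop := fun s => F (scons x s).

Lemma feed_linear x : linear (feed x).
Proof. by []. Qed.

Lemma feedB x F G : feed x (F - G) = feed x F - feed x G.
Proof. by []. Qed.

Lemma feed_inj F G : (forall x, feed x F = feed x G) -> F = G.
Proof.
move=> FG; apply/funext => s.
have -> : s = scons (s 0%N) (stail s) by apply/funext => -[].
exact: (congr1 (fun H : sop => H (stail s)) (FG (s 0%N))).
Qed.

Fixpoint fn_eval (n : nat) : Fn U n -> sop :=
  match n with
  | 0 => fun f _ => f
  | n'.+1 => fun f s => fn_eval (f (s 0%N)) (stail s)
  end.

Lemma feed_fn_eval n (f : Fn U n.+1) x : feed x (fn_eval f) = fn_eval (f x).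
Proof. by []. Qed.

Lemma fn_eval_fadd n (f g : Fn U n) : fn_eval (fadd f g) = fn_eval f + fn_eval g.
Proof. by elim: n f g => [|n IH] f g; apply/funext => s //=; rewrite IH. Qed.

Lemma fn_eval_fscale n a (f : Fn U n) : fn_eval (fscale a f) = a *: fn_eval f.
Proof. by elim: n f => [|n IH] f; apply/funext => s //=; rewrite IH. Qed.

Lemma fn_eval_fzero n : fn_eval (fzero U n) = 0.
Proof. by elim: n => [|n IH]; apply/funext => s //=; rewrite IH. Qed.

Lemma fn_eval_castF m n (e : m = n) (f : Fn U m) : fn_eval (castF e f) = fn_eval f.
Proof. by case: n / e. Qed.

Lemma fn_eval_inj n : injective (@fn_eval n).
Proof.
elim: n => [|n IH] f g fg; first exact: (congr1 (fun H : sop => H (fun=> 0)) fg).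
by apply/funext => x; apply: IH; rewrite -!feed_fn_eval fg.
Qed.

Fixpoint multilinear (n : nat) (F : sop) : Prop :=
  if n is n'.+1 then
    linear (fun x => feed x F) /\
    (forall x, multilinear n' (feed x F))
  else True.

Lemma multilinear_feed n x F : multilinear n.+1 F -> multilinear n (feed x F).
Proof. by case=> _; apply. Qed.

Lemma islin_multilinear n (f : Fn U n) : islin f <-> multilinear n (fn_eval f).
Proof.
elim: n f => [|n IH] f //=; split=> [[fx_lin f_lin] | [f_lin fx_lin]]; split.
- by move=> a x y; rewrite !feed_fn_eval f_lin fn_eval_fadd fn_eval_fscale.
- by move=> x; rewrite feed_fn_eval; apply/IH.
- by move=> x; apply/IH; rewrite -feed_fn_eval.
- move=> a x y; apply: fn_eval_inj.
  by rewrite -!feed_fn_eval fn_eval_fadd fn_eval_fscale f_lin.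
Qed.

Fixpoint scirc (a : nat) : nat -> sop -> sop -> sop :=
  fix scirc_a (b : nat) : sop -> sop -> sop :=
    match a, b with
    | 0, _ => fun _ _ => 0
    (* an operator of order 0 is a constant function, the vector [B (fun=> 0)] *)
    | a'.+1, 0 => fun A B => feed (B (fun=> 0)) A
    | a'.+1, b'.+1 => fun A B s =>
        scirc_a b' A (feed (s 0%N) B) (stail s) + scirc a' b (feed (s 0%N) A) B (stail s)
    end.

Lemma scirc0n b A B : scirc 0 b A B = 0.
Proof. by case: b. Qed.

Lemma scircS0 a A B : scirc a.+1 0 A B = feed (B (fun=> 0)) A.
Proof. by []. Qed.

Lemma feed_scircSS a b A B x :
  feed x (scirc a.+1 b.+1 A B) = scirc a.+1 b A (feed x B) + scirc a b.+1 (feed x A) B.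
Proof. by []. Qed.

Lemma fn_eval_circ p q (A : Fn U p.+1) (B : Fn U q.+1) :
  fn_eval (circ A B) = scirc p.+1 q.+1 (fn_eval A) (fn_eval B).
Proof.
elim: p q A B => [|p IHp] q; elim: q => [|q IHq] A B; apply: feed_inj => x;
  rewrite feed_fn_eval feed_scircSS ?scirc0n; cbn [circ];
  by rewrite fn_eval_fadd fn_eval_castF ?fn_eval_fzero ?IHp ?IHq.
Qed.

Lemma scirc_linl a b B : linear (fun A => scirc a b A B).
Proof.
move=> k A1 A2; elim: a b A1 A2 B => [|a IHa] b A1 A2 B.
  by rewrite !scirc0n scaler0 addr0.
elim: b A1 A2 B => [|b IHb] A1 A2 B; first by rewrite !scircS0 feed_linear.
by apply: feed_inj => x; rewrite !(feed_linear, feed_scircSS) IHb IHa addrACA -scalerDr.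
Qed.

Lemma scirc_linr a b A : multilinear a A -> linear (scirc a b A).
Proof.
move=> + k B1 B2; elim: a b A B1 B2 => [|a IHa] b A B1 B2.
  by rewrite !scirc0n scaler0 addr0.
case=> A_lin feedA_lin; elim: b B1 B2 => [|b IHb] B1 B2; first by rewrite !scircS0 /= A_lin.
apply: feed_inj => x.
by rewrite !(feed_linear, feed_scircSS) IHb (IHa _ _ _ _ (feedA_lin x)) addrACA -scalerDr.
Qed.

Lemma scirc_0l a b B : scirc a b 0 B = 0.
Proof. exact: linear0_of (scirc_linl a b B). Qed.

Lemma scirc_0r a b A : multilinear a A -> scirc a b A 0 = 0.
Proof. by move=> A_ml; apply: linear0_of; apply: scirc_linr. Qed.

Lemma scircDl a b A1 A2 B : scirc a b (A1 + A2) B = scirc a b A1 B + scirc a b A2 B.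
Proof. by have := scirc_linl a b B 1 A1 A2; rewrite !scale1r. Qed.

Lemma scircDr a b A B1 B2 : multilinear a A ->
  scirc a b A (B1 + B2) = scirc a b A B1 + scirc a b A B2.
Proof. by move=> A_ml; have := scirc_linr b A_ml 1 B1 B2; rewrite !scale1r. Qed.

Lemma scirc_suml a b I (r : seq I) (P : pred I) (F : I -> sop) B :
  scirc a b (\sum_(i <- r | P i) F i) B = \sum_(i <- r | P i) scirc a b (F i) B.
Proof.
exact: (big_morph (scirc a b ^~ B) (fun A1 A2 => scircDl a b A1 A2 B) (scirc_0l a b B)).
Qed.

Lemma scirc_sumr a b A I (r : seq I) (P : pred I) (F : I -> sop) : multilinear a A ->
  scirc a b A (\sum_(i <- r | P i) F i) = \sum_(i <- r | P i) scirc a b A (F i).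
Proof.
move=> A_ml.
exact: (big_morph (scirc a b A) (fun B1 B2 => scircDr b B1 B2 A_ml) (scirc_0r b A_ml)).
Qed.

Lemma multilinear0 n : multilinear n 0.
Proof. by elim: n => [|n IH] //=; split=> // a x y; rewrite scaler0 addr0. Qed.

Lemma multilinear_lin n k F G :
  multilinear n F -> multilinear n G -> multilinear n (k *: F + G).
Proof.
elim: n F G => [|n IH] F G //= [F_lin F_ml] [G_lin G_ml]; split=> [a x y | x].
  by rewrite !feed_linear F_lin G_lin !scalerDr !scalerA mulrC addrACA.
by rewrite feed_linear; apply: IH.
Qed.

Lemma multilinear_scirc_head a b A B : multilinear a.+1 A -> multilinear b.+1 B ->
  linear (fun x => feed x (scirc a.+1 b.+1 A B)).
Proof.
move=> A_ml B_ml k x y; rewrite !feed_scircSS (proj1 B_ml) (proj1 A_ml).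
by rewrite scirc_linr // scirc_linl addrACA -scalerDr.
Qed.

Lemma multilinear_scirc a b A B : multilinear a.+1 A -> multilinear b B ->
  multilinear (a + b) (scirc a.+1 b A B).
Proof.
elim: a b A B => [|a IHa] b; elim: b => [|b IHb] A B A_ml B_ml;
  rewrite ?addn0; try exact: multilinear_feed _ A_ml.
all: rewrite addnS; split; first exact: multilinear_scirc_head.
all: move=> x; rewrite feed_scircSS -[X in X + _]scale1r.
all: apply: multilinear_lin; first exact: IHb (multilinear_feed x B_ml).
  by rewrite scirc0n; apply: multilinear0.
by rewrite addSnnS; apply: IHa (multilinear_feed x A_ml) B_ml.
Qed.

Definition sassoc a b c A B C :=
  scirc (a + b).-1 c (scirc a b A B) C - scirc a (b + c).-1 A (scirc b c B C).

Lemma sassoc0n b c A B C : sassoc 0 b c A B C = 0.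
Proof. by rewrite /sassoc !scirc0n scirc_0l subrr. Qed.

Lemma sassocC0 a c A B C : (0 < c)%N -> multilinear a A ->
  sassoc a 0 c A B C = sassoc a c 0 A C B.
Proof.
case: a A => [|a] A; first by rewrite !sassoc0n.
case: c C => [//|c] C _ A_ml; rewrite /sassoc !addn0 !addnS scirc_0r //.
by rewrite addSn (scircS0 (a + c)) feed_scircSS addrAC subrr add0r subr0.
Qed.

Lemma feed_sassoc a b c A B C x : multilinear a.+1 A ->
  feed x (sassoc a.+1 b.+1 c.+1 A B C) =
  sassoc a.+1 b.+1 c A B (feed x C) + sassoc a.+1 b c.+1 A (feed x B) C +
  sassoc a b.+1 c.+1 (feed x A) B C.
Proof.
move=> A_ml; rewrite /sassoc !addSn !addnS !succnK feedB !feed_scircSS.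
rewrite scircDl !(scircDr _ _ _ A_ml).
by rewrite addrA !opprD addrACA; congr (_ + _); apply: addrACA.
Qed.

(* For B and C of order 0 the associator is A(B, C), which is not symmetric. *)
Lemma sassocC a b c A B C : (0 < b + c)%N ->
  multilinear a A -> multilinear b B -> multilinear c C ->
  sassoc a b c A B C = sassoc a c b A C B.
Proof.
have [n] := ubnP (a + b + c); elim: n => // n IHn in a b c A B C *.
move=> abc_lt bc_gt0 A_ml B_ml C_ml.
case: a A A_ml abc_lt => [|a] A A_ml abc_lt; first by rewrite !sassoc0n.
case: b B B_ml abc_lt bc_gt0 => [|b] B B_ml abc_lt bc_gt0; first exact: sassocC0.
case: c C C_ml abc_lt bc_gt0 => [|c] C C_ml abc_lt bc_gt0; first exact/esym/sassocC0.
apply: feed_inj => x; rewrite !feed_sassoc //.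
move: (multilinear_feed x A_ml) (multilinear_feed x B_ml) (multilinear_feed x C_ml).
move=> Ax_ml Bx_ml Cx_ml.
rewrite (IHn a.+1 b.+1 c) ?(IHn a.+1 b c.+1) ?(IHn a b.+1 c.+1) //; try lia.
by rewrite [X in X + _ = _]addrC.
Qed.

End StreamOperators.

Section GradedOperators.
Variables (K : fieldType) (U : lmodType K).
Local Notation sop := ((nat -> U) -> U).
Local Notation gop := (nat -> sop).

Definition gcirc (F G : gop) : gop :=
  fun r => \sum_(i < r.+1) scirc i.+1 (r - i).+1 (F i) (G (r - i)%N).

Definition gmultilinear (F : gop) := forall r, multilinear r.+1 (F r).

Definition gfinite (F : gop) := exists N, forall r, (N <= r)%N -> F r = 0.

Lemma gop_linE k (F G : gop) r : (k *: F + G) r = k *: F r + G r.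
Proof. by []. Qed.

Lemma gopBE (F G : gop) r : (F - G) r = F r - G r.
Proof. by []. Qed.

Lemma gcirc_linl H : linear (gcirc^~ H).
Proof.
move=> k F G; apply/funext => r.
rewrite gop_linE /gcirc scaler_sumr -big_split.
by apply: eq_bigr => i _; rewrite gop_linE scirc_linl.
Qed.

Lemma gcirc_linr F : gmultilinear F -> linear (gcirc F).
Proof.
move=> F_ml k G H; apply/funext => r.
rewrite gop_linE /gcirc scaler_sumr -big_split.
by apply: eq_bigr => i _; rewrite gop_linE scirc_linr.
Qed.

Lemma gmultilinear0 : gmultilinear 0.
Proof. by move=> r; apply: multilinear0. Qed.

Lemma gmultilinear_lin k F G :
  gmultilinear F -> gmultilinear G -> gmultilinear (k *: F + G).
Proof. by move=> F_ml G_ml r; apply: multilinear_lin. Qed.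

Lemma gmultilinear_gcirc F G :
  gmultilinear F -> gmultilinear G -> gmultilinear (gcirc F G).
Proof.
move=> F_ml G_ml r; apply: (big_ind (multilinear r.+1)) => [|A B A_ml B_ml|i _].
- exact: multilinear0.
- by rewrite -[A]scale1r; apply: multilinear_lin.
- have := multilinear_scirc (F_ml i) (G_ml (r - i)%N).
  by rewrite addnS subnKC // -ltnS.
Qed.

Lemma gfinite0 : gfinite 0.
Proof. by exists 0%N. Qed.

Lemma gfinite_lin k F G : gfinite F -> gfinite G -> gfinite (k *: F + G).
Proof.
move=> [NF F0] [NG G0]; exists (maxn NF NG) => r.
by rewrite geq_max gop_linE => /andP[/F0 -> /G0 ->]; rewrite scaler0 addr0.
Qed.

Lemma gfinite_gcirc F G : gmultilinear F -> gfinite F -> gfinite G -> gfinite (gcirc F G).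
Proof.
move=> F_ml [NF F0] [NG G0]; exists (NF + NG)%N => r le_r; apply: big1 => i _.
have [/F0 -> | lt_i] := leqP NF i; first exact: scirc_0l.
by rewrite G0 ?scirc_0r //; lia.
Qed.

Lemma gcirc_assocE F G H r : gmultilinear F ->
  gcirc (gcirc F G) H r - gcirc F (gcirc G H) r =
  \sum_(j < r.+1) \sum_(k < (r - j).+1)
    sassoc j.+1 k.+1 (r - j - k).+1 (F j) (G k) (H (r - j - k)%N).
Proof.
move=> F_ml; rewrite /gcirc.
under eq_bigr do rewrite scirc_suml.
under [X in _ - X]eq_bigr => j _ do rewrite (scirc_sumr _ _ _ _ (F_ml j)).
rewrite (sum_triangle r (fun i j =>
  scirc i.+1 (r - i).+1 (scirc j.+1 (i - j).+1 (F j) (G (i - j)%N)) (H (r - i)%N))).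
rewrite -sumrB; apply: eq_bigr => j _; rewrite -sumrB; apply: eq_bigr => k _.
have le_k : (k <= r - j)%N := ltn_ord k.
by rewrite /sassoc !addSn !succnK !addnS subnKC // addKn subnDA.
Qed.

Lemma gcirc_preLie F G H : gmultilinear F -> gmultilinear G -> gmultilinear H ->
  gcirc (gcirc F G) H - gcirc F (gcirc G H) = gcirc (gcirc F H) G - gcirc F (gcirc H G).
Proof.
move=> F_ml G_ml H_ml; apply/funext => r; rewrite !gopBE !gcirc_assocE //.
apply: eq_bigr => j _; rewrite [RHS](reindex_inj rev_ord_inj) /=.
apply: eq_bigr => k _; have le_k : (k <= r - j)%N := ltn_ord k.
by rewrite subSS subKn // sassocC.
Qed.

Definition ginU0m (F : gop) := gmultilinear F /\ gfinite F.

Lemma ginU0m0 : ginU0m 0.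
Proof. by split; [apply: gmultilinear0 | apply: gfinite0]. Qed.

Lemma ginU0m_lin k F G : ginU0m F -> ginU0m G -> ginU0m (k *: F + G).
Proof.
by move=> [F_ml F_fin] [G_ml G_fin]; split; [apply: gmultilinear_lin | apply: gfinite_lin].
Qed.

Lemma ginU0m_gcirc F G : ginU0m F -> ginU0m G -> ginU0m (gcirc F G).
Proof.
by move=> [F_ml F_fin] [G_ml G_fin]; split;
  [apply: gmultilinear_gcirc | apply: gfinite_gcirc].
Qed.

End GradedOperators.

Section Families.
Variables (K : fieldType) (U : lmodType K).

Definition geval (X : Fam U) : nat -> (nat -> U) -> U := fun r => fn_eval (X r).

Lemma geval_inj : injective geval.
Proof.
move=> X Y XY; apply: functional_extensionality_dep => r.
by apply: fn_eval_inj; apply: (congr1 (fun F => F r) XY).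
Qed.

Lemma geval_famzero : geval (@famzero K U) = 0.
Proof. by apply/funext => r; apply: fn_eval_fzero. Qed.

Lemma geval_famadd X Y : geval (famadd X Y) = geval X + geval Y.
Proof. by apply/funext => r; apply: fn_eval_fadd. Qed.

Lemma geval_famscale a X : geval (famscale a X) = a *: geval X.
Proof. by apply/funext => r; apply: fn_eval_fscale. Qed.

Lemma geval_famcirc X Y : geval (famcirc X Y) = gcirc (geval X) (geval Y).
Proof.
apply/funext => r; rewrite /geval /famcirc.
rewrite (big_morph (@fn_eval K U r.+1) (@fn_eval_fadd K U r.+1) (fn_eval_fzero U r.+1)).
by apply: eq_bigr => i _; rewrite fn_eval_castF fn_eval_circ.
Qed.

Lemma geval_fambracket X Y :
  geval (fambracket X Y) = gcirc (geval X) (geval Y) - gcirc (geval Y) (geval X).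
Proof. by rewrite geval_famadd geval_famscale !geval_famcirc scaleN1r. Qed.

Lemma inU0m_geval X : inU0m X <-> ginU0m (geval X).
Proof.
split=> [[X_lin [N XN]] | [X_ml [N XN]]]; split.
- by move=> r; apply/islin_multilinear.
- by exists N => r /XN; rewrite /geval => ->; apply: fn_eval_fzero.
- by move=> r; apply/islin_multilinear.
- exists N => r /XN XrN; apply: fn_eval_inj.
  by rewrite fn_eval_fzero.
Qed.

End Families.

Theorem corollary2p2 (K : fieldType) (U : lmodType K)
  (charK0 : [pchar K]%R =i pred0) :
  is_lie_algebra (@inU0m K U) (@famzero K U) (@famadd K U) (@famscale K U)
    (@fambracket K U).
Proof.
have gLie : is_lie_algebra (@ginU0m K U) 0 +%R *:%R (fun F G => gcirc F G - gcirc G F).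
  apply: is_lie_algebra_commutator.
  - exact: ginU0m0.
  - exact: ginU0m_lin.
  - exact: ginU0m_gcirc.
  - by move=> a F G H _ _ [H_ml _]; apply: gcirc_linl.
  - by move=> a F G H [F_ml _] _ _; apply: gcirc_linr.
  - by move=> F G H [F_ml _] [G_ml _] [H_ml _]; apply: gcirc_preLie.
apply: (is_lie_algebra_transfer (@geval_inj K U) (@inU0m_geval K U) _ _ _ _ gLie).
- exact: geval_famzero.
- exact: geval_famadd.
- exact: geval_famscale.
- exact: geval_fambracket.
Qed.
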